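(* The fraction of algebraic tangle expressions is invariant under the elementary moves, twists, flypes and ring moves; explicitly, for every algebraic tangle expression $A$ (products being left-associative, $2:=101$, $\overline2:=\overline1 0\overline1$): (i) elementary moves: $\mathrm{Frac}(01)=\mathrm{Frac}(00)$ and $\mathrm{Frac}(10\overline1)=\mathrm{Frac}(0)=\mathrm{Frac}(\overline101)$; (ii) twist: $\mathrm{Frac}(10\rho_x(A)0\overline1)=\mathrm{Frac}(A)=\mathrm{Frac}(\overline10\rho_x(A)01)$; (iii) flypes: $\mathrm{Frac}(\overline A\,\overline1\,1\,\overline1)=\mathrm{Frac}(\overline A\,0\,1\,\overline1\,1\,0)=\mathrm{Frac}(A)=\mathrm{Frac}(\overline A\,0\,\overline1\,1\,\overline1\,0)=\mathrm{Frac}(\overline A\,1\,\overline1\,1)$; (iv) ring move: $\mathrm{Frac}\bigl(A0(2(\overline20)0)\bigr)=\mathrm{Frac}\bigl(2(\overline20)A\bigr)$.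
   Context: Algebraic tangle expressions are built from the basic tangles $0,\infty,1,\overline1$ by sums and products $AB:=A0+B$, where $A0$ denotes the reflection of $A$ under $(x,y,z)\mapsto(-y,-x,z)$; products are left-associative ($ABC=(AB)C$). $\overline A$ is the expression obtained from $A$ by swapping every $1$ with $\overline1$ (the mirror image). The fraction is defined recursively by $\mathrm{Frac}(0)=0$, $\mathrm{Frac}(\infty)=\infty$, $\mathrm{Frac}(1)=1$, $\mathrm{Frac}(\overline1)=-1$, $\mathrm{Frac}(LR)=\mathrm{Frac}(R)+1/\mathrm{Frac}(L)$, in $\mathbb{Q}\cup\{\infty\}$ with $1/0=\infty$, $1/\infty=0$, $x+\infty=\infty+x=\infty$, $-\infty=\infty$. The rotation $\rho_x$ (by $\pi$ about the $x$-axis) acts on expressions recursively by $\rho_x(c)=\rho_y(c)=c$ for basic $c$, $\rho_x(LR)=\rho_y(L)\rho_x(R)$, $\rho_y(LR)=(\rho_y(R)0)(\rho_x(L)0)$. *)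

From HB Require Import structures.
From mathcomp Require Import all_boot all_order all_algebra.
Set Implicit Arguments. Unset Strict Implicit. Unset Printing Implicit Defensive.
Import Order.TTheory GRing.Theory Num.Theory.
Local Open Scope ring_scope.

(* Algebraic tangle expressions: basic tangles 0, oo, 1, 1bar and products LR.
   (The sum A + B equals the product (A0)B, since A00 = A, so it needs no
   separate constructor.) *)
Inductive texpr : Type :=
  | T0 : texpr
  | Tinf : texpr
  | T1 : texpr
  | T1bar : texpr
  | Tprod : texpr -> texpr -> texpr.

(* Extended rationals Q ∪ {oo}; None stands for oo. *)
Definition qext := option rat.

Definition qinv (x : qext) : qext :=
  match x with
  | None => Some 0
  | Some q => if q == 0 then None else Some q^-1
  end.

Definition qadd (x y : qext) : qext :=
  match x, y with
  | Some a, Some b => Some (a + b)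
  | _, _ => None
  end.

Fixpoint Frac (e : texpr) : qext :=
  match e with
  | T0 => Some 0
  | Tinf => None
  | T1 => Some 1
  | T1bar => Some (-1)
  | Tprod L R => qadd (Frac R) (qinv (Frac L))
  end.

Fixpoint tbar (e : texpr) : texpr :=
  match e with
  | T1 => T1bar
  | T1bar => T1
  | Tprod L R => Tprod (tbar L) (tbar R)
  | c => c
  end.

Fixpoint rho_x (e : texpr) : texpr :=
  match e with
  | Tprod L R => Tprod (rho_y L) (rho_x R)
  | c => c
  end
with rho_y (e : texpr) : texpr :=
  match e with
  | Tprod L R => Tprod (Tprod (rho_y R) T0) (Tprod (rho_x L) T0)
  | c => c
  end.

Definition T2 : texpr := Tprod (Tprod T1 T0) T1.
Definition T2bar : texpr := Tprod (Tprod T1bar T0) T1bar.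

From HB Require Import structures.
From mathcomp Require Import all_boot all_order all_algebra ring.
Import Order.TTheory GRing.Theory Num.Theory.
Local Open Scope ring_scope.

(* Frac of a product is a composite of the maps x |-> x + 1, x |-> x - 1 and
   x |-> 1 / x of Q u {oo}. The mirror image negates Frac and the rotations
   preserve it, so the twists reduce to (x + 1) - 1 = x, and the flypes to the
   relation 1 + 1 / (-1 + 1 / (1 + 1 / x)) = -x between these maps. For the ring
   move, Frac (2 (2bar 0)) = 0, which makes both sides infinite. *)

Definition qneg (x : qext) : qext := if x is Some q then Some (- q) else None.

Lemma qnegK : involutive qneg.
Proof. by case=> [q|] //=; rewrite opprK. Qed.

Lemma qinvK : involutive qinv.
Proof.
case=> [q|] //=; have [->|q0] := eqVneq q 0 => //=.
by rewrite invr_eq0 (negbTE q0) invrK.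
Qed.

Lemma qinvN x : qinv (qneg x) = qneg (qinv x).
Proof. by case: x => [q|] //=; rewrite oppr_eq0; case: eqP => //= _; rewrite invrN. Qed.

Lemma qinv0 : qinv (Some 0) = None.
Proof. by []. Qed.

Lemma qinvE a b : a * b = 1 -> qinv (Some a) = Some b.
Proof.
move=> ab1 /=; have [a0|a0] := eqVneq a 0.
  by move: ab1; rewrite a0 mul0r => /eqP; rewrite eq_sym oner_eq0.
by rewrite -[b]mul1r -(mulVf a0) -mulrA ab1 mulr1.
Qed.

Lemma qaddC x y : qadd x y = qadd y x.
Proof. by case: x => [a|]; case: y => [b|] //=; rewrite addrC. Qed.

Lemma qaddA x y z : qadd x (qadd y z) = qadd (qadd x y) z.
Proof. by case: x => [a|]; case: y => [b|]; case: z => [c|] //=; rewrite addrA. Qed.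

Lemma qadd0l x : qadd (Some 0) x = x.
Proof. by case: x => [a|] //=; rewrite add0r. Qed.

Lemma qadd_Some a b : qadd (Some a) (Some b) = Some (a + b).
Proof. by []. Qed.

Lemma qaddN x y : qadd (qneg x) (qneg y) = qneg (qadd x y).
Proof. by case: x => [a|]; case: y => [b|] //=; rewrite opprD. Qed.

Lemma qaddinfr x : qadd x None = None.
Proof. by case: x. Qed.

Lemma qflype x :
  qadd (Some 1) (qinv (qadd (Some (-1)) (qinv (qadd (Some 1) (qinv x))))) = qneg x.
Proof.
case: x => [a|] //.
have [->|a0] := eqVneq a 0; first by [].
have [->|a1] := eqVneq a (-1); first by [].
have a1' : a + 1 != 0 by rewrite addr_eq0.
rewrite (@qinvE a a^-1) ?mulfV // qadd_Some (@qinvE _ (a / (a + 1))); last first.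
  by field; apply/andP.
rewrite qadd_Some (@qinvE _ (- (a + 1))); last by field.
by rewrite qadd_Some; congr Some; ring.
Qed.

Lemma Frac_prod L R : Frac (Tprod L R) = qadd (Frac R) (qinv (Frac L)).
Proof. by []. Qed.

Lemma Frac_prod0 X : Frac (Tprod X T0) = qinv (Frac X).
Proof. exact: qadd0l. Qed.

Lemma Frac_tbar e : Frac (tbar e) = qneg (Frac e).
Proof. by elim: e => //= L -> R ->; rewrite qinvN qaddN. Qed.

Lemma Frac_mirror e y : Frac (tbar e) = qneg y -> Frac e = y.
Proof. by rewrite Frac_tbar => /(congr1 qneg); rewrite !qnegK. Qed.

Lemma Frac_rho e : Frac (rho_x e) = Frac e /\ Frac (rho_y e) = Frac e.
Proof.
elim: e => // L [IHLx IHLy] R [IHRx IHRy]; split; first by rewrite /= IHLy IHRx.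
by rewrite [rho_y _]/= Frac_prod !Frac_prod0 IHLx IHRy qinvK qaddC.
Qed.

Lemma Frac_rho_x e : Frac (rho_x e) = Frac e.
Proof. by case: (Frac_rho e). Qed.

Lemma Frac_twist1 X : Frac (Tprod (Tprod (Tprod (Tprod T1 T0) X) T0) T1bar) = Frac X.
Proof.
rewrite Frac_prod Frac_prod0 qinvK Frac_prod -[Frac T1bar]/(Some (-1)).
rewrite -[qinv (Frac (Tprod T1 T0))]/(Some 1) qaddC -qaddA qadd_Some.
by rewrite addrN qaddC qadd0l.
Qed.

Lemma Frac_twist1bar X : Frac (Tprod (Tprod (Tprod (Tprod T1bar T0) X) T0) T1) = Frac X.
Proof. by apply: Frac_mirror; rewrite [tbar _]/= Frac_twist1 Frac_tbar. Qed.

Lemma Frac_flype1 X : Frac (Tprod (Tprod (Tprod X T1) T1bar) T1) = qneg (Frac X).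
Proof. exact: qflype. Qed.

Lemma Frac_flype1bar X : Frac (Tprod (Tprod (Tprod X T1bar) T1) T1bar) = qneg (Frac X).
Proof. by apply: Frac_mirror; rewrite [tbar _]/= Frac_flype1 Frac_tbar. Qed.

Lemma Frac_ring_move A R :
  Frac R = Some 0 -> Frac (Tprod (Tprod A T0) (Tprod R T0)) = Frac (Tprod R A).
Proof. by move=> R0; rewrite !Frac_prod R0 qinv0 !qaddinfr. Qed.

Lemma Frac_2_2bar0 : Frac (Tprod T2 (Tprod T2bar T0)) = Some 0.
Proof. by []. Qed.

Theorem lemma6 :
  (* (i) elementary moves *)
  (Frac (Tprod T0 T1) = Frac (Tprod T0 T0) /\
   Frac (Tprod (Tprod T1 T0) T1bar) = Frac T0 /\
   Frac T0 = Frac (Tprod (Tprod T1bar T0) T1)) /\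
  (forall A : texpr,
    (* (ii) twist *)
    (Frac (Tprod (Tprod (Tprod (Tprod T1 T0) (rho_x A)) T0) T1bar) = Frac A /\
     Frac A = Frac (Tprod (Tprod (Tprod (Tprod T1bar T0) (rho_x A)) T0) T1)) /\
    (* (iii) flypes *)
    (Frac (Tprod (Tprod (Tprod (tbar A) T1bar) T1) T1bar)
       = Frac (Tprod (Tprod (Tprod (Tprod (Tprod (tbar A) T0) T1) T1bar) T1) T0) /\
     Frac (Tprod (Tprod (Tprod (Tprod (Tprod (tbar A) T0) T1) T1bar) T1) T0)
       = Frac A /\
     Frac A
       = Frac (Tprod (Tprod (Tprod (Tprod (Tprod (tbar A) T0) T1bar) T1) T1bar) T0) /\
     Frac (Tprod (Tprod (Tprod (Tprod (Tprod (tbar A) T0) T1bar) T1) T1bar) T0)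
       = Frac (Tprod (Tprod (Tprod (tbar A) T1) T1bar) T1)) /\
    (* (iv) ring move *)
    Frac (Tprod (Tprod A T0) (Tprod (Tprod T2 (Tprod T2bar T0)) T0))
      = Frac (Tprod (Tprod T2 (Tprod T2bar T0)) A)).
Proof.
split; first by [].
move=> A; rewrite Frac_twist1 Frac_twist1bar Frac_rho_x Frac_ring_move ?Frac_2_2bar0 //.
rewrite !Frac_prod0 !Frac_flype1 !Frac_flype1bar !Frac_prod0 !Frac_tbar.
by rewrite !qinvN !qinvK !qnegK.
Qed.
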